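(* Let $G$ be a finite nilpotent group and $N\lhd G$, $\Gamma=G/N$. Then the following are equivalent: (i) $1\to N\to G\to\Gamma\to1$ splits; (ii) $1\to N_p\to G_p\to\Gamma_p\to1$ splits for all primes $p$; (iii) $\mathcal{K}_r^S(G/N)=1$ in $\Omega(G)$.
   Context: For a prime $p$ and Sylow $p$-subgroup $G_p$ of $G$, $N_p=N\cap G_p$ and $\Gamma_p=(G_pN)/N$. $\Omega(G)$ is the Burnside ring of $G$ (Grothendieck ring of finite $G$-sets under disjoint union and Cartesian product), with dimension homomorphism $\alpha(X)=|X|$ and regular element $r=G/\{e\}$. $S=\{G/H_1,\dots,G/H_n\}$ where $H_1,\dots,H_n$ is a full set of representatives of the conjugacy classes of subgroups of $G$. For $x\in\Omega(G)$, $S(x)=\{s\in S: s\cdot x\in\mathbb{Z}r\}$, $\mathrm{Ind}(x)=\{m\in\mathbb{Z}: s\cdot x=m r \text{ for some } s\in S(x)\}$, and $\mathcal{K}_r^S(x)=\gcd(\mathrm{Ind}(x))$ (with $\mathcal{K}_r^S(x)=\infty$ if $S(x)=\emptyset$). *)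

From HB Require Import structures.
From mathcomp Require Import all_boot all_order all_algebra all_fingroup all_solvable.
Set Implicit Arguments. Unset Strict Implicit. Unset Printing Implicit Defensive.
Import GroupScope.

Record gset (gT : finGroupType) (G : {set gT}) := GSet {
  gs_T : finType;
  gs_A : {set gs_T};
  gs_act : gs_T -> gT -> gs_T;
  gs_stable : forall x g, x \in gs_A -> g \in G -> gs_act x g \in gs_A;
  gs_id : forall x, x \in gs_A -> gs_act x 1 = x;
  gs_mul : forall x g h, x \in gs_A -> g \in G -> h \in G ->
             gs_act x (g * h) = gs_act (gs_act x g) h }.

Section GSets.
Variables (gT : finGroupType) (G : {group gT}).

Definition gset_iso (X Y : gset G) : Prop :=
  exists f : gs_T X -> gs_T Y,
    [/\ {in gs_A X &, injective f}, f @: gs_A X = gs_A Y &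
        forall x g, x \in gs_A X -> g \in G -> f (gs_act x g) = gs_act (f x) g].

Definition coset_gset (H : {group gT}) : gset G.
Proof.
refine (@GSet gT G {set gT}%type (rcosets H G) (fun C g => C :* g) _ _ _).
- move=> C g /rcosetsP [x xG ->] gG; rewrite -rcosetM; apply/rcosetsP.
  by exists (x * g) => //; rewrite groupM.
- by move=> C _; rewrite rcoset1.
- by move=> C g h _ _ _; rewrite rcosetM.
Defined.

Definition empty_gset : gset G.
Proof.
refine (@GSet gT G void set0 (fun x _ => x) _ _ _); by [].
Defined.

Definition sum_gset (X Y : gset G) : gset G.
Proof.
refine (@GSet gT G (gs_T X + gs_T Y)%type
  [set z | match z with inl x => x \in gs_A X | inr y => y \in gs_A Y end]
  (fun z g => match z with inl x => inl (gs_act x g) | inr y => inr (gs_act y g) end)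
  _ _ _).
- by move=> [x|y] g; rewrite !inE => ? ?; apply: gs_stable.
- by move=> [x|y]; rewrite inE => ?; rewrite gs_id.
- by move=> [x|y] g h; rewrite inE => ? ? ?; rewrite gs_mul.
Defined.

Definition prod_gset (X Y : gset G) : gset G.
Proof.
refine (@GSet gT G (gs_T X * gs_T Y)%type (setX (gs_A X) (gs_A Y))
  (fun z g => (gs_act z.1 g, gs_act z.2 g)) _ _ _).
- by move=> [x y] g /setXP [? ?] ?; apply/setXP; split; apply: gs_stable.
- by move=> [x y] /setXP [? ?] /=; rewrite !gs_id.
- by move=> [x y] g h /setXP [? ?] ? ? /=; rewrite !gs_mul.
Defined.

Fixpoint nat_gset (n : nat) (X : gset G) : gset G :=
  if n is n'.+1 then sum_gset X (nat_gset n' X) else empty_gset.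

(* Equality of the classes [X] and [Y] in the Burnside ring Omega(G),
   i.e. in the Grothendieck group of finite G-sets under disjoint union. *)
Definition omega_eq (X Y : gset G) : Prop :=
  exists Z : gset G, gset_iso (sum_gset X Z) (sum_gset Y Z).

Definition reg_gset : gset G := coset_gset 1%G.

(* [X] = m r in Omega(G) for the integer m = a - b *)
Definition omega_eq_int (X : gset G) (m : int) : Prop :=
  exists a b : nat, m = (a%:Z - b%:Z)%R /\
    omega_eq (sum_gset X (nat_gset b reg_gset)) (nat_gset a reg_gset).

Definition subgroup_class_reps (S : {set {group gT}}) : Prop :=
  [/\ forall H, H \in S -> H \subset G,
      forall K : {group gT}, K \subset G ->
        exists2 H, H \in S & exists2 g, g \in G & (K :=: H :^ g) &
      forall H1 H2, H1 \in S -> H2 \in S ->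
        (exists2 g, g \in G & (H1 :^ g :=: H2)) -> H1 = H2].

(* Ind(x) for x = [X] (product s.x being the Cartesian product) *)
Definition Ind (S : {set {group gT}}) (X : gset G) (m : int) : Prop :=
  exists2 H, H \in S & omega_eq_int (prod_gset (coset_gset H) X) m.

Definition is_gcd_set (P : int -> Prop) (d : nat) : Prop :=
  (forall m, P m -> (d%:Z %| m)%Z) /\
  (forall e : int, (forall m, P m -> (e %| m)%Z) -> (e %| d%:Z)%Z).

(* K_r^S(x) = k, with None standing for infinity (S(x) empty) *)
Definition KrS_eq (S : {set {group gT}}) (X : gset G) (k : option nat) : Prop :=
  match k with
  | None => ~ (exists m, Ind S X m)
  | Some d => (exists m, Ind S X m) /\ is_gcd_set (Ind S X) d
  end.

End GSets.

Definition ext_splits (gT : finGroupType) (N E : {set gT}) (Q : {set coset_of N}) :=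
  exists s : {morphism Q >-> gT},
    s @* Q \subset E /\ {in Q, forall y, coset N (s y) = y}.
Arguments ext_splits {gT} N E Q.

From HB Require Import structures.
From mathcomp Require Import all_boot all_order all_algebra all_fingroup all_solvable.
From Stdlib Require Import Classical.

(* A splitting of G -> G/N is the same as a complement K of N in G, and for a
   Sylow subgroup G_p of G the kernel of G_p -> Gamma_p is N_p = G_p :&: N, so
   (i) and (ii) are statements about complements.  A nilpotent group is the
   direct product of its Sylow subgroups; as their orders are coprime, the
   components of an element of N lie in N, and complements of the N_p in the
   G_p multiply to a complement of N.
   Marks (numbers of fixed points of single elements) are additive and
   isomorphism invariant, hence defined on Omega(G).  G/H x G/N has a point
   fixed by every element of H :&: N, and |G:H| |G:N| points, so
   G/H x G/N = m r forces H :&: N = 1 and m |H| |N| = |G|; then G_p :&: H is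
   a complement of N_p in G_p whenever p does not divide m, and gcd Ind = 1
   provides such an m for every p.  Conversely, for a complement K the map (Kx, Ny) |-> Kx :&: Ny is
   an isomorphism G/K x G/N ~ G/1, whence 1 is in Ind. *)

Set Implicit Arguments.
Unset Strict Implicit.
Unset Printing Implicit Defensive.
Open Scope group_scope.

Section SplittingOverIntersection.
Variables (gT : finGroupType) (N : {group gT}).
Implicit Types A B C G H K P : {group gT}.

Lemma ext_splitsP A : A \subset 'N(N) ->
  ext_splits N A (A / N) <-> [splits A, over A :&: N].
Proof.
move=> nNA; split=> [[s [simA sectK]] | /splitsP[K /complP[tiK defA]]].
  apply/splitsP; exists (s @* (A / N))%G; apply/complP; split.
    apply/trivgP/subsetP=> x /setIP[/setIP[_ Nx] /morphimP[y _ Ay defx]].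
    by rewrite defx in Nx *; rewrite -(sectK y Ay) coset_id ?morph1 ?inE.
  apply/eqP; rewrite eqEsubset mul_subG ?subsetIl //=.
  apply/subsetP=> x Ax; have Nx := subsetP nNA x Ax.
  have Ax' : coset N x \in A / N by rewrite mem_quotient.
  set k := s (coset N x); have Kk : k \in s @* (A / N) by rewrite mem_morphim.
  have Ak := subsetP simA k Kk.
  have Nk := subsetP nNA k Ak.
  rewrite -(mulgKV k x) mem_mulg // inE groupM ?groupV //=.
  apply: coset_idr; rewrite ?groupM ?groupV // morphM ?morphV ?groupV //.
  by rewrite [coset_morphism N k]sectK ?mulgV.
have sKA : K \subset A by rewrite -defA mulG_subr.
have nNK := subset_trans sKA nNA.
have tiNK : N :&: K = 1 by rewrite -(setIidPr sKA) setIA (setIC N) tiK.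
have injK := isom_inj (quotient_isom nNK tiNK).
have defAq : A / N = restrm nNK (coset N) @* K.
  by rewrite im_restrm -defA quotientMr // (quotientS1 (subsetIr A N)) mul1g.
have sAqIm : A / N \subset restrm nNK (coset N) @* K by rewrite defAq.
exists (restrm sAqIm (invm injK)); split.
  by rewrite morphim_restrm setIid {1}defAq im_invm.
move=> y Aqy /=; rewrite defAq in Aqy.
by have /= := invmK injK Aqy; rewrite /restrm /=; apply.
Qed.

Lemma normal_Sylow_splits p m G H P : prime p -> P <| G -> p.-Sylow(G) P ->
    N \subset G -> H \subset G -> H :&: N = 1 ->
    (m * (#|H| * #|N|))%N = #|G| -> ~~ (p %| m) ->
  [splits P, over P :&: N].
Proof.
move=> p_pr nsPG sylP sNG sHG tiHN defG p'm.
have m_gt0 : 0 < m by move: (cardG_gt0 G); rewrite -defG muln_gt0 => /andP[].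
have sylPH := setI_normal_Hall nsPG sylP sHG.
have sylPN := setI_normal_Hall nsPG sylP sNG.
have tiPNH : (P :&: N) :&: (P :&: H) = 1.
  by apply/trivgP; rewrite -tiHN setIC setISS ?subsetIr.
have cardP : #|P| = (#|P :&: N| * #|P :&: H|)%N.
  rewrite (card_Hall sylP) (card_Hall sylPH) (card_Hall sylPN) -defG.
  by rewrite !partnM ?muln_gt0 ?cardG_gt0 // part_p'nat ?p'natE // mul1n mulnC.
apply/splitsP; exists (P :&: H)%G; apply/complP; split=> //.
apply/eqP; rewrite eqEcard mul_subG ?subsetIl //= TI_cardMg // cardP; exact: leqnn.
Qed.

Lemma coprime_dprod_splits A B C : A \x B = C -> coprime #|A| #|B| ->
    [splits A, over A :&: N] -> [splits B, over B :&: N] ->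
  [splits C, over C :&: N].
Proof.
move=> defC coAB /splitsP[KA /complP[tiKA defA]] /splitsP[KB /complP[tiKB defB]].
have [_ defAB cBA _] := dprodP defC.
have sKAA : KA \subset A by rewrite -defA mulG_subr.
have sKBB : KB \subset B by rewrite -defB mulG_subr.
have cKBKA : KB \subset 'C(KA) := centSS sKBB sKAA cBA.
have defK : KA <*> KB = KA * KB := cent_joinEr cKBKA.
apply/splitsP; exists (KA <*> KB)%G; apply/complP; split.
  apply/trivgP/subsetP=> x /setIP[/setIP[_ Nx]]; rewrite /= defK.
  case/mulsgP=> a b KAa KBb defx; rewrite {}defx in Nx *.
  have cab : commute a b := esym (centP (subsetP cKBKA b KBb) a KAa).
  have co_ab : coprime #[a] #[b].
    apply: coprime_dvdl (order_dvdG (subsetP sKAA a KAa)) _.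
    exact: coprime_dvdr (order_dvdG (subsetP sKBB b KBb)) coAB.
  have Na : a \in N.
    by rewrite -cycle_subG (subset_trans (cycleMsub cab co_ab)) // cycle_subG.
  have Nb : b \in N by rewrite -(mulKg a b) groupM ?groupV.
  have : a \in (A :&: N) :&: KA by rewrite !inE Na (subsetP sKAA).
  have : b \in (B :&: N) :&: KB by rewrite !inE Nb (subsetP sKBB).
  by rewrite tiKA tiKB => /set1P-> /set1P->; rewrite mulg1 group1.
apply/eqP; rewrite /= defK eqEsubset mul_subG ?subsetIl ?mul_subG //=; last 2 first.
- by rewrite -defAB (subset_trans sKAA) ?mulG_subl.
- by rewrite -defAB (subset_trans sKBB) ?mulG_subr.
have cKA_BN : KA \subset 'C(B :&: N).
  by rewrite centsC (subset_trans (subsetIl B N)) // (subset_trans cBA) ?centS.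
rewrite -{1}defAB -defA -defB mulgA -(mulgA _ KA) (centC cKA_BN) !mulgA -mulgA.
by rewrite mulgA !mulSg // subsetI -defAB mulgSS ?subsetIl // mul_subG ?subsetIr.
Qed.

Lemma TI_splits A : A :&: N = 1 -> [splits A, over A :&: N].
Proof.
move=> tiAN; apply/splitsP; exists A; apply/complP.
by rewrite tiAN setI1g mul1g.
Qed.

Lemma nilpotent_splits A : nilpotent A ->
    (forall p, prime p -> [splits 'O_p(A), over 'O_p(A) :&: N]) ->
  [splits A, over A :&: N].
Proof.
elim: {A}_.+1 {-2}A (ltnSn #|A|) => // n IHn A; rewrite ltnS => leAn nilA splitsA.
have [-> | ntA] := eqsVneq A 1; first by rewrite TI_splits ?setI1g.
pose p := pdiv #|A|; have p_pr : prime p by rewrite pdiv_prime ?cardG_gt1.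
have defA := nilpotent_pcoreC p nilA.
apply: coprime_dprod_splits defA _ (splitsA p p_pr) _.
  exact: pnat_coprime (pcore_pgroup _ _) (pcore_pgroup _ _).
have ltA : #|'O_p^'(A)| < #|A|.
  rewrite proper_card // properEneq pcore_sub andbT; apply: contraNneq ntA => defA'.
  have : p^'.-group A by rewrite -defA' pcore_pgroup.
  by rewrite /pgroup p'natE // pdiv_dvd.
apply: IHn (leq_trans ltA leAn) (nilpotentS (pcore_sub _ _) nilA) _ => q q_pr.
rewrite -(pcore_setI_normal q (pcore_normal p^' A)).
have [-> | q'p] := eqVneq q p; first by rewrite TI_pcoreC TI_splits ?setI1g.
rewrite (setIidPl _) ?splitsA // pcore_max ?pcore_normal //.
by apply: sub_pgroup (pcore_pgroup q A) => r; rewrite !inE => /eqP->.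
Qed.

End SplittingOverIntersection.

Lemma card_sum_set (T1 T2 : finType) (A : {set T1 + T2}) :
  #|A| = (#|[set x | inl x \in A]| + #|[set y | inr y \in A]|)%N.
Proof.
by rewrite -!sum1_card (big_sumType _ (fun z => z \in A)); congr (_ + _)%N;
  apply: eq_bigl => x; rewrite inE.
Qed.

Lemma rcosetI (gT : finGroupType) (A B : {set gT}) x :
  A :* x :&: B :* x = (A :&: B) :* x.
Proof. by apply/setP=> y; rewrite !(inE, mem_rcoset). Qed.

Section Marks.
Variables (gT : finGroupType) (G : {group gT}).
Implicit Types (X Y : gset G) (H K : {group gT}).

Definition nfix X g := #|[set x in gs_A X | gs_act x g == x]|.

Lemma nfix_iso X Y g : gset_iso X Y -> g \in G -> nfix X g = nfix Y g.
Proof.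
case=> f [injf imf actf] Gg; rewrite /nfix.
have -> : [set y in gs_A Y | gs_act y g == y] =
          f @: [set x in gs_A X | gs_act x g == x].
  apply/setP=> y; apply/idP/imsetP=> [|[x]].
    rewrite inE -imf => /andP[/imsetP[x Ax ->] /eqP fixfx].
    exists x => //; rewrite inE Ax -(inj_in_eq injf) ?actf ?fixfx ?eqxx //.
    exact: gs_stable.
  move=> /[!inE] /andP[Ax /eqP fixx] ->.
  by rewrite -actf // fixx eqxx andbT -imf imset_f.
apply/esym/card_in_imset => x y /[!inE] /andP[Ax _] /andP[Ay _]; exact: injf.
Qed.

Lemma nfix_sum X Y g : nfix (sum_gset X Y) g = (nfix X g + nfix Y g)%N.
Proof.
by rewrite /nfix card_sum_set; congr (_ + _)%N; apply: eq_card => x;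
  rewrite !inE /=; congr (_ && _); apply/eqP/eqP=> [[] | ->].
Qed.

Lemma nfix1 X : nfix X 1 = #|gs_A X|.
Proof.
apply: eq_card => x; rewrite !inE.
by case Ax: (x \in gs_A X); rewrite //= gs_id ?eqxx.
Qed.

Lemma nfix_reg g : g != 1 -> nfix (reg_gset G) g = 0%N.
Proof.
move=> ntg; apply/eqP; rewrite cards_eq0; apply/eqP/setP=> C; rewrite !inE /=.
apply/andP=> -[/rcosetsP[x _ ->]]; rewrite -rcosetM.
move=> /eqP/rcoset_eqP/rcosetP[_ /set1P-> ]; rewrite mul1g -{2}(mulg1 x).
by move/mulgI/eqP; rewrite (negPf ntg).
Qed.

Lemma nfix_nat_reg n g : g \in G ->
  nfix (nat_gset n (reg_gset G)) g = if g == 1 then (n * #|G|)%N else 0%N.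
Proof.
move=> Gg; elim: n => [|n IHn] /=.
  by rewrite /nfix; case: (g == 1); apply/eqP; rewrite cards_eq0; apply/eqP/setP=> -[].
rewrite nfix_sum IHn; have [-> | ntg] := eqVneq g 1; last by rewrite nfix_reg.
by rewrite nfix1 /= -[#|rcosets _ _|]/#|G : 1| indexg1 mulSn.
Qed.

Lemma nfix_omega_eq_int X m g : omega_eq_int X m -> g \in G ->
  ((nfix X g)%:Z = if g == 1%g then m * #|G|%:Z else 0)%R.
Proof.
case=> a [b [-> [Z /nfix_iso isoXZ]]] Gg; move: (isoXZ g Gg).
rewrite !nfix_sum !nfix_nat_reg //; case: eqP => _ /eqP; rewrite eqn_add2r.
  by move/eqP=> defa; rewrite GRing.mulrBl -!PoszM -defa PoszD GRing.addrK.
by rewrite addn0 => /eqP->.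
Qed.

Lemma coset_prod_omega_eq_int H K m : H \subset G -> K \subset G ->
    omega_eq_int (prod_gset (coset_gset G H) (coset_gset G K)) m ->
  H :&: K = 1 /\ (`|m| * (#|H| * #|K|))%N = #|G|.
Proof.
move=> sHG sKG /nfix_omega_eq_int marks; split.
  apply/trivgP/subsetP=> g /setIP[Hg Kg]; apply/set1P.
  have HK_fixed : (H : {set gT}, K : {set gT}) \in
      [set x in gs_A (prod_gset (coset_gset G H) (coset_gset G K)) | gs_act x g == x].
    rewrite !inE /= !rcoset_id // eqxx andbT.
    by apply/andP; split; apply/rcosetsP; exists 1; rewrite ?rcoset1.
  move: (marks g (subsetP sHG g Hg)); case: eqP => // _ /eqP.
  by rewrite eqz_nat cards_eq0 => /eqP HKfix; rewrite HKfix inE in HK_fixed.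
move: (marks 1 (group1 G)); rewrite eqxx nfix1 cardsX => /(congr1 absz).
rewrite abszM !absz_nat => defm.
have := Lagrange sHG; have := Lagrange sKG; have := cardG_gt0 G.
change (#|G : H| * #|G : K| = `|m| * #|G|)%N in defm.
move=> G_gt0 LK LH; apply/eqP; rewrite -(eqn_pmul2r G_gt0); apply/eqP.
by rewrite mulnAC -defm -{1}LH -LK mulnACA (mulnC #|G : H|) (mulnC #|G : K|).
Qed.

Lemma gset_iso_sumr X Y Z : gset_iso X Y -> gset_iso (sum_gset X Z) (sum_gset Y Z).
Proof.
case=> f [injf imf actf].
exists (fun u : gs_T X + gs_T Z =>
  match u return gs_T Y + gs_T Z with inl x => inl (f x) | inr z => inr z end).
split.
- move=> [x|z] [x'|z'] /[!inE] Ax Ax' // [e]; last by rewrite e.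
  by rewrite (injf _ _ Ax Ax' e).
- apply/setP=> -[y|z]; rewrite inE; apply/imsetP/idP.
  + case=> -[x /[!inE] Ax [->] | ? _ /eqP //].
    by rewrite -imf; apply: imset_f.
  + by rewrite -imf => /imsetP[x Ax ->]; exists (inl x); rewrite ?inE.
  + by case=> -[? _ /eqP // | z' /[!inE] Az [->]].
  + by exists (inr z); rewrite ?inE.
- by move=> [x|z] g /[!inE] Ax Gg //=; rewrite actf.
Qed.

Lemma rcosets_pair_diag H K C D : H * K = G ->
    C \in rcosets H G -> D \in rcosets K G ->
  exists2 x, x \in G & (C, D) = (H :* x, K :* x).
Proof.
move=> defG /rcosetsP[y Gy ->] /rcosetsP[z Gz ->].
have /mulsgP[h k Hh Kk yz'] : y * z^-1 \in H * K by rewrite defG groupM ?groupV.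
have Gh : h \in G by rewrite -defG -[h]mulg1 mem_mulg.
exists (h^-1 * y); first by rewrite groupM ?groupV.
have hy : h^-1 * y = k * z by rewrite -(mulgKV z y) yz' -!mulgA mulKg.
by rewrite rcosetM (rcoset_id (groupVr Hh)) hy rcosetM (rcoset_id Kk).
Qed.

Lemma coset_prod_iso_reg H K : H :&: K = 1 -> H * K = G ->
  gset_iso (prod_gset (coset_gset G H) (coset_gset G K)) (reg_gset G).
Proof.
move=> tiHK defG; exists (fun u => u.1 :&: u.2); split.
- move=> [C D] [C' D'] /setXP[/= HC KD] /setXP[/= HC' KD'] /=.
  have [x _ [-> ->]] := rcosets_pair_diag defG HC KD.
  have [x' _ [-> ->]] := rcosets_pair_diag defG HC' KD'.
  by rewrite !rcosetI tiHK => /rcoset_eqP/rcosetP[_ /set1P-> ]; rewrite mul1g => ->.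
- apply/setP=> C; apply/imsetP/idP=> [[[C1 D1] /setXP[/= HC KD] ->] | ].
    have [x Gx [-> ->]] := rcosets_pair_diag defG HC KD.
    by rewrite rcosetI tiHK; apply/rcosetsP; exists x.
  case/rcosetsP=> x Gx ->; exists (H :* x, K :* x); last by rewrite rcosetI tiHK.
  by apply/setXP; split; apply/rcosetsP; exists x.
- by move=> [C D] g _ _ /=; rewrite rcosetI.
Qed.

Lemma omega_eq_int_reg X : gset_iso X (reg_gset G) -> omega_eq_int X 1.
Proof.
move=> isoX; exists 1%N, 0%N; split=> //; exists (empty_gset G).
by apply: gset_iso_sumr; apply: gset_iso_sumr.
Qed.

End Marks.

Lemma ext_splits_of_Sylows gT (G N : {group gT}) :
    nilpotent G -> N <| G ->
    (forall p (P : {group gT}), prime p -> p.-Sylow(G) P ->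
       ext_splits N P (P * N / N)) ->
  ext_splits N G (G / N).
Proof.
move=> nilG /andP[_ nNG] splitsSyl.
apply/ext_splitsP => //; apply: (nilpotent_splits nilG) => p p_pr.
have nNO := subset_trans (pcore_sub p G) nNG.
rewrite -ext_splitsP // -quotientMidr.
exact: splitsSyl (nilpotent_pcore_Hall p nilG).
Qed.

Lemma KrS1_of_ext_splits gT (G N : {group gT}) (S : {set {group gT}}) :
    N <| G -> subgroup_class_reps G S ->
  ext_splits N G (G / N) -> KrS_eq S (coset_gset G N) (Some 1%N).
Proof.
move=> /andP[sNG nNG] [sSG repS _] /(ext_splitsP nNG).
rewrite (setIidPr sNG) => /splitsP[K /complP[tiNK defG]].
have sKG : K \subset G by rewrite -defG mulG_subr.
have [H SH [g Gg defK]] := repS K sKG.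
have defH : H :=: K :^ g^-1 by rewrite defK conjsgK.
have nNg : N :^ g^-1 = N := normsP nNG _ (groupVr Gg).
have tiHN : H :&: N = 1 by rewrite defH -nNg -conjIg setIC tiNK conjs1g.
have defHN : H * N = G.
  by rewrite defH -nNg -conjsMg (normC (subset_trans sKG nNG)) defG conjGid ?groupV.
have Ind1 : Ind S (coset_gset G N) 1.
  by exists H => //; apply/omega_eq_int_reg/coset_prod_iso_reg.
split; first by exists 1%R.
by split=> [m _ | e /(_ 1%R Ind1)]; first exact: dvd1z.
Qed.

Lemma Sylow_ext_splits_of_KrS1 gT (G N : {group gT}) (S : {set {group gT}}) :
    nilpotent G -> N <| G -> subgroup_class_reps G S ->
    KrS_eq S (coset_gset G N) (Some 1%N) ->
  forall p (P : {group gT}), prime p -> p.-Sylow(G) P -> ext_splits N P (P * N / N).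
Proof.
move=> nilG /andP[sNG nNG] [sSG _ _] [_ [_ gcd1]] p P p_pr sylP.
have [m [H SH /(coset_prod_omega_eq_int (sSG H SH) sNG)[tiHN defG]] p'm] :
    exists2 m, Ind S (coset_gset G N) m & ~~ (p %| m)%Z.
  apply: NNPP => noInd.
  have : (p %| 1)%Z.
    by apply: gcd1 => m Indm; apply/negPn/negP => p'm; apply: noInd; exists m.
  by rewrite dvdzE dvdn1 /= => /eqP p1; rewrite p1 in p_pr.
have nsPG : P <| G by rewrite (nilpotent_Hall_pcore nilG sylP) pcore_normal.
rewrite quotientMidr ext_splitsP ?(subset_trans (normal_sub nsPG)) //.
rewrite dvdzE in p'm.
exact: normal_Sylow_splits p_pr nsPG sylP sNG (sSG H SH) tiHN defG p'm.
Qed.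

Theorem lemma3p5 (gT : finGroupType) (G N : {group gT})
    (S : {set {group gT}}) :
  nilpotent G -> N <| G -> subgroup_class_reps G S ->
  [/\ (ext_splits N G (G / N)%g <->
       (forall (p : nat) (P : {group gT}), prime p -> p.-Sylow(G) P ->
          ext_splits N P ((P * N) / N)%g)),
      ((forall (p : nat) (P : {group gT}), prime p -> p.-Sylow(G) P ->
          ext_splits N P ((P * N) / N)%g) <->
       KrS_eq S (coset_gset G N) (Some 1%N)) &
      (KrS_eq S (coset_gset G N) (Some 1%N) <-> ext_splits N G (G / N)%g)].
Proof.
move=> nilG nsNG reps.
have i_iii := KrS1_of_ext_splits nsNG reps.
have iii_ii := Sylow_ext_splits_of_KrS1 nilG nsNG reps.
have ii_i := ext_splits_of_Sylows nilG nsNG.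
split; split.
- by move/i_iii/iii_ii.
- exact: ii_i.
- by move/ii_i/i_iii.
- exact: iii_ii.
- by move/iii_ii/ii_i.
- exact: i_iii.
Qed.
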